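(* Let $X_1,\dots,X_m\subseteq\mathbb{R}^d$ be a family of nonempty finite sets in general position and let $n\ge1$ be an integer. Then there exists $\delta>0$ such that the following holds: if $X_1^{(n)}$ is obtained from $X_1$ by replacing each point $x\in X_1$ by a set (cloud) of $n$ points each within distance $\delta$ of $x$, in such a way that the family $X_1^{(n)},X_2,\dots,X_m$ is in general position, then \[ c(X_1,\dots,X_m)=c(X_1^{(n)},X_2,\dots,X_m). \]
   Context: A family of finite sets $X_1,\dots,X_m\subseteq\mathbb{R}^d$ is in general position if the sets are pairwise disjoint and their union is a set of points in general position. Sets $Y_1,\dots,Y_{d+1}\subseteq\mathbb{R}^d$ have the same-type property if for every choice $y_1\in Y_1,\dots,y_{d+1}\in Y_{d+1}$ the orientation of $(y_1,\dots,y_{d+1})$ is the same; sets $Y_1,\dots,Y_m$ have the same-type property if every $d+1$ of them do. For a family $X_1,\dots,X_m$ of nonempty finite sets in general position, $c(X_1,\dots,X_m)$ is the largest $c$ such that there exist $Y_i\subseteq X_i$ with the same-type property and $|Y_i|\ge c|X_i|$ for all $i$. *)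

From HB Require Import structures.
From mathcomp Require Import all_boot all_order all_algebra.
From mathcomp Require Import finmap.
From mathcomp Require Import boolp classical_sets reals.
Set Implicit Arguments. Unset Strict Implicit. Unset Printing Implicit Defensive.
Import Order.TTheory GRing.Theory Num.Theory.
Local Open Scope ring_scope.
Local Open Scope fset_scope.

Section Defs.
Variables (R : realType) (d : nat).
Notation pt := 'rV[R]_d.

Definition edist (x y : pt) : R := Num.sqrt (\sum_(k < d) (x 0 k - y 0 k) ^+ 2).

(* orientation of (y_1, ..., y_{d+1}): sign of det of the (d+1)x(d+1) matrix
   whose i-th row is (1, y_i) *)
Definition orient (y : 'I_d.+1 -> pt) : R :=
  Num.sg (\det (\matrix_(i < d.+1, j < d.+1)
     match unlift ord0 j with None => 1 | Some k => y i 0 k end)).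

(* a finite point set is in general position: no d+1 distinct points of it
   lie on a common affine hyperplane *)
Definition gen_pos_pts (P : {fset pt}) : Prop :=
  forall y : 'I_d.+1 -> pt, injective y -> (forall j, y j \in P) -> orient y != 0.

Definition gen_pos_family (k : nat) (X : 'I_k -> {fset pt}) : Prop :=
  (forall i j, i != j -> fdisjoint (X i) (X j)) /\
  gen_pos_pts (\big[fsetU/fset0]_(i < k) X i).

Definition same_type_dp1 (Y : 'I_d.+1 -> {fset pt}) : Prop :=
  forall y y' : 'I_d.+1 -> pt, (forall j, y j \in Y j) -> (forall j, y' j \in Y j) ->
    orient y = orient y'.

Definition same_type (k : nat) (Y : 'I_k -> {fset pt}) : Prop :=
  forall f : 'I_d.+1 -> 'I_k, injective f -> same_type_dp1 (fun j => Y (f j)).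

(* c(X_1, ..., X_k): the largest c such that there are Y_i ⊆ X_i with the
   same-type property and |Y_i| >= c |X_i| for all i (for nonempty X_i this
   set of admissible c is nonempty, bounded above by 1, and its supremum is
   attained, there being finitely many choices of the Y_i) *)
Definition cval (k : nat) (X : 'I_k -> {fset pt}) : R :=
  sup [set c : R | exists Y : 'I_k -> {fset pt},
        (forall i, Y i `<=` X i) /\ same_type Y /\
        (forall i, c * #|` X i|%:R <= #|` Y i|%:R)].

End Defs.

(* Replacing one point of a (d+1)-tuple in general position by a point close
   enough to it does not change the orientation, and the union of the X_i
   contains only finitely many such tuples; clouds around distinct points of
   X_1 are moreover disjoint once they are small. A tuple tested for the
   same-type property takes its points from distinct classes, so it meets
   the blown-up class at most once, and its orientation does not change when
   that point is moved to or from the centre of its cloud. Hence same-type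
   subfamilies transfer both ways: blow Y_1 up into its clouds, or shrink a
   subset of X_1^(n) to the centres of the clouds it meets. Every cloud has n
   points, so neither transfer decreases |Y_i|/|X_i|, and the two families
   have the same admissible ratios c. *)

From mathcomp Require Import all_boot all_order all_algebra.
From mathcomp Require Import finmap.
From mathcomp Require Import boolp classical_sets reals.
From mathcomp Require Import lra.
Import Order.TTheory GRing.Theory Num.Theory.
Local Open Scope ring_scope.
Local Open Scope fset_scope.

Lemma exists_pos_uniform {R : realType} (T : finType) (P : T -> R -> Prop) :
  (forall t e e', P t e -> 0 < e' <= e -> P t e') ->
  (forall t, exists2 e, 0 < e & P t e) -> exists2 e, 0 < e & forall t, P t e.
Proof.
move=> P_anti P_pos.
suff [e e_gt0 eP] : exists2 e, 0 < e & forall t, t \in enum T -> P t e.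
  by exists e => // t; apply: eP; rewrite mem_enum.
elim: (enum T) => [|t s [e e_gt0 eP]]; first by exists 1.
have [et et_gt0 etP] := P_pos t.
have min_gt0 : 0 < Num.min e et by rewrite lt_min e_gt0 et_gt0.
exists (Num.min e et) => // t'; rewrite inE => /predU1P[->|t's].
  by apply: P_anti etP _; rewrite min_gt0 ge_min lexx orbT.
by apply: P_anti (eP _ t's) _; rewrite min_gt0 ge_min lexx.
Qed.

Lemma sgr_eq_of_dist_lt {R : realDomainType} (a b : R) :
  `|b - a| < `|a| -> Num.sg b = Num.sg a.
Proof.
have [a_lt0|a_gt0|->] := ltrgtP a 0; last by rewrite normr0 ltNge normr_ge0.
- rewrite (ltr0_norm a_lt0) ltr_norml (ltr0_sg a_lt0) => /andP[_ ?].
  by rewrite ltr0_sg //; lra.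
- rewrite (gtr0_norm a_gt0) ltr_norml (gtr0_sg a_gt0) => /andP[? _].
  by rewrite gtr0_sg //; lra.
Qed.

Section Orientation.
Context {R : realType} {d : nat}.
Notation pt := 'rV[R]_d.
Implicit Types (x y c : pt) (z : 'I_d.+1 -> pt).

Definition orient_mx z : 'M[R]_d.+1 :=
  \matrix_(i < d.+1, j < d.+1)
     match unlift ord0 j with None => 1 | Some k => z i 0 k end.

Lemma orientE z : orient z = Num.sg (\det (orient_mx z)).
Proof. by []. Qed.

Definition upd z (j0 : 'I_d.+1) c j := if j == j0 then c else z j.

Lemma upd_id z j0 : upd z j0 (z j0) = z.
Proof. by apply: funext => j; rewrite /upd; case: eqP => [->|]. Qed.

Lemma upd_upd z j0 a b : upd (upd z j0 a) j0 b = upd z j0 b.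
Proof. by apply: funext => j; rewrite /upd; case: eqP. Qed.

Definition coord_close (e : R) x y := forall k, `|y 0 k - x 0 k| <= e.

Lemma coord_close_le e e' x y : e <= e' -> coord_close e x y -> coord_close e' x y.
Proof. by move=> le_ee' xy k; apply: le_trans le_ee'. Qed.

Lemma coord_close_edist e x y : edist y x <= e -> coord_close e x y.
Proof.
move=> le_e k; apply: le_trans le_e.
have sqr_sum_ge0 : 0 <= \sum_(i < d) (y 0 i - x 0 i) ^+ 2.
  by apply: sumr_ge0 => i _; exact: sqr_ge0.
rewrite -sqrtr_sqr ler_sqrt // (bigD1 k) //= lerDl.
by apply: sumr_ge0 => i _; exact: sqr_ge0.
Qed.

(* Expanding along row [j0], the determinant is an affine function of [z j0]
   whose coefficients, the cofactors, do not depend on [z j0]. *)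
Lemma orient_upd_close z j0 : orient z != 0 ->
  exists2 e, 0 < e & forall c, coord_close e (z j0) c -> orient (upd z j0 c) = orient z.
Proof.
rewrite orientE sgr_eq0 => det_neq0.
set S := \sum_k `|cofactor (orient_mx z) j0 k|.
have S_ge0 : 0 <= S by apply: sumr_ge0 => k _; exact: normr_ge0.
have det_gt0 : 0 < `|\det (orient_mx z)| by rewrite normr_gt0.
set e := `|\det (orient_mx z)| / (S + 1).
have e_gt0 : 0 < e by apply: divr_gt0 => //; lra.
exists e => // c zc; rewrite !orientE; apply: sgr_eq_of_dist_lt.
have cofactor_upd k : cofactor (orient_mx (upd z j0 c)) j0 k = cofactor (orient_mx z) j0 k.
  congr (_ * \det _); apply/matrixP => a b.
  by rewrite !mxE /upd eq_sym (negPf (neq_lift j0 a)).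
rewrite (expand_det_row _ j0) [X in _ - X](expand_det_row _ j0) -sumrB.
apply: le_lt_trans (ler_norm_sum _ _ _) _; apply: (@le_lt_trans _ _ (e * S)).
  rewrite mulr_sumr; apply: ler_sum => k _.
  rewrite cofactor_upd -mulrBl normrM ler_wpM2r // !mxE /upd eqxx.
  by case: (unlift ord0 k) => [k'|]; [exact: zc | rewrite subrr normr0 ltW].
rewrite /e mulrAC ltr_pdivrMr; last lra.
by rewrite ltr_pM2l //; lra.
Qed.

Lemma exists_pos_orient_stable (P : {fset pt}) : gen_pos_pts P ->
  exists2 e, 0 < e & forall z j0 c, injective z -> (forall j, z j \in P) ->
    coord_close e (z j0) c -> orient (upd z j0 c) = orient z.
Proof.
move=> P_gen.
pose stable (t : {ffun 'I_d.+1 -> P} * 'I_d.+1) e :=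
  injective (fun j => val (t.1 j)) -> forall c, coord_close e (val (t.1 t.2)) c ->
    orient (upd (fun j => val (t.1 j)) t.2 c) = orient (fun j => val (t.1 j)).
have [e e_gt0 eP] : exists2 e, 0 < e & forall t, stable t e.
  apply: exists_pos_uniform => [t e e' + /andP[_ le_e'e] z_inj c zc|[t j0]].
    by move/(_ z_inj c); apply; apply: coord_close_le zc.
  have [z_inj|] := pselect (injective (fun j => val (t j))); last by exists 1.
  have [|e e_gt0 eP] := @orient_upd_close (fun j => val (t j)) j0.
    by apply: P_gen => // j; exact: valP.
  by exists e => // _ c; apply: eP.
exists e => // z j0 c z_inj zP zc.
have t_val : (fun j => val ([ffun j => [` zP j]] j)) = z.
  by apply: funext => j; rewrite ffunE.
by have := eP ([ffun j => [` zP j]], j0); rewrite /stable /= t_val ffunE; apply.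
Qed.

Lemma exists_pos_separating (A : {fset pt}) :
  exists2 e, 0 < e & forall x x' y, x \in A -> x' \in A ->
    coord_close e x y -> coord_close e x' y -> x = x'.
Proof.
pose separated (t : A * A) e :=
  forall y, coord_close e (val t.1) y -> coord_close e (val t.2) y -> val t.1 = val t.2.
have [e e_gt0 eP] : exists2 e, 0 < e & forall t, separated t e.
  apply: exists_pos_uniform => [t e e' + /andP[_ le_e'e] y xy x'y|t].
    by apply; apply: coord_close_le le_e'e _.
  rewrite /separated; move: (val t.1) (val t.2) => x x'.
  have [->|/eqP neq_xx'] := eqVneq x x'; first by exists 1.
  have [k neq_k] : exists k, x 0 k != x' 0 k.
    have [//|no_k] := pselect (exists k, x 0 k != x' 0 k).
    by case: neq_xx'; apply/rowP => k; apply/eqP; apply: contra_notT no_k; exists k.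
  have dist_gt0 : 0 < `|x 0 k - x' 0 k| by rewrite normr_gt0 subr_eq0.
  exists (`|x 0 k - x' 0 k| / 3) => [|y /(_ k) xy /(_ k) x'y]; first exact: divr_gt0.
  exfalso; have := ler_distD (y 0 k) (x 0 k) (x' 0 k); rewrite (distrC (x 0 k) (y 0 k)); lra.
by exists e => // x x' y xA x'A; apply: (eP ([` xA], [` x'A])).
Qed.

End Orientation.

Section Families.
Context {R : realType} {d k : nat}.
Notation pt := 'rV[R]_d.

Definition admissible (X Y : 'I_k -> {fset pt}) (c : R) :=
  (forall i, Y i `<=` X i) /\ same_type Y /\
  (forall i, c * #|` X i|%:R <= #|` Y i|%:R).

Lemma cvalE X : cval X = sup [set c | exists Y, admissible X Y c].
Proof. by []. Qed.

Lemma inj_tuple_disjoint (X : 'I_k -> {fset pt}) (f : 'I_d.+1 -> 'I_k) z :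
  (forall i j, i != j -> [disjoint X i & X j]) -> injective f ->
  (forall j, z j \in X (f j)) -> injective z.
Proof.
move=> disjX f_inj zX j j' eq_z; apply: f_inj; apply/eqP; apply: contraT => neq_f.
by have /fdisjointP/(_ _ (zX j)) := disjX _ _ neq_f; rewrite eq_z zX.
Qed.

End Families.

Section Blowup.
Context {R : realType} {d k : nat}.
Notation pt := 'rV[R]_d.
Variables (X : 'I_k -> {fset pt}) (i0 : 'I_k) (C : pt -> {fset pt}) (n : nat).

Definition cloud_union (A : {fset pt}) := \big[fsetU/fset0]_(x <- A) C x.

Definition blowup (Y : 'I_k -> {fset pt}) i :=
  if i == i0 then cloud_union (Y i0) else Y i.

Definition shrink (Y : 'I_k -> {fset pt}) i :=
  if i == i0 then [fset x in X i0 | C x `&` Y i0 != fset0] else Y i.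

Lemma blowup_neq Y i : i != i0 -> blowup Y i = Y i.
Proof. by rewrite /blowup => /negPf->. Qed.

Lemma shrink_neq Y i : i != i0 -> shrink Y i = Y i.
Proof. by rewrite /shrink => /negPf->. Qed.

Definition cloud_linked a b := (a \in X i0 /\ b \in C a) \/ (b \in X i0 /\ a \in C b).

Hypothesis n_gt0 : (0 < n)%N.
Hypothesis card_cloud : {in X i0, forall x, #|` C x| = n}.
Hypothesis disjoint_cloud : {in X i0 &, forall x x', x != x' -> [disjoint C x & C x']}.
Hypothesis orient_cloud : forall (f : 'I_d.+1 -> 'I_k) z j0 c,
  injective f -> (forall j, z j \in X (f j)) -> f j0 = i0 -> c \in C (z j0) ->
  orient (upd z j0 c) = orient z.

Lemma mem_cloud_union y A : reflect (exists2 x, x \in A & y \in C x) (y \in cloud_union A).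
Proof.
by apply: (iffP (bigfcupP _ _ _ _)) => [[x /andP[xA _]]|[x xA]]; exists x; rewrite ?xA.
Qed.

Lemma card_cloud_union A : A `<=` X i0 -> #|` cloud_union A| = (n * #|` A|)%N.
Proof.
move=> AX; rewrite card_fset_sum1 partition_disjoint_bigfcup; last first.
  by move=> x x' xA x'A; apply: disjoint_cloud; exact: (fsubsetP AX).
rewrite big_seq (eq_bigr (fun _ => n)) => [|x xA]; last first.
  by rewrite -card_fset_sum1 card_cloud ?(fsubsetP AX).
by rewrite -big_seq big_const_seq count_predT iter_addn_0 mulnC.
Qed.

Lemma orient_upd_linked f z j0 a b : injective f -> f j0 = i0 ->
  (forall j, j != j0 -> z j \in X (f j)) -> cloud_linked a b ->
  orient (upd z j0 a) = orient (upd z j0 b).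
Proof.
move=> f_inj fj0 zX.
suff upd_cloud x c : x \in X i0 -> c \in C x -> orient (upd z j0 c) = orient (upd z j0 x).
  by case=> [[aX bCa]|[bX aCb]]; [rewrite (upd_cloud a b) | rewrite (upd_cloud b a)].
move=> xX cCx; rewrite -(upd_upd z j0 x c) (orient_cloud _ _ _ _ f_inj) //; last by rewrite /upd eqxx.
by move=> j; rewrite /upd; case: eqP => [->|/eqP]; [rewrite fj0 | exact: zX].
Qed.

Lemma same_type_linked Y Y' :
  (forall i, i != i0 -> Y' i = Y i) -> (forall i, i != i0 -> Y i `<=` X i) ->
  (forall a, a \in Y' i0 -> exists2 b, b \in Y i0 & cloud_linked a b) ->
  same_type Y -> same_type Y'.
Proof.
move=> Y'E YX linked Y_st f f_inj.
suff to_Y z : (forall j, z j \in Y' (f j)) ->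
    exists2 z', (forall j, z' j \in Y (f j)) & orient z = orient z'.
  by move=> z1 z2 /to_Y[z1' z1Y ->] /to_Y[z2' z2Y ->]; exact: (Y_st f f_inj).
move=> zY'.
have [[j0 /eqP fj0]|no_i0] := pselect (exists j0, f j0 == i0); last first.
  exists z => // j; rewrite -Y'E //; apply: contra_notN no_i0 => ?; by exists j.
have [b bY ab] : exists2 b, b \in Y i0 & cloud_linked (z j0) b.
  by apply: linked; rewrite -fj0.
have fj_neq j : j != j0 -> f j != i0 by move=> neq_j; rewrite -fj0 (inj_eq f_inj).
exists (upd z j0 b).
  move=> j; rewrite /upd; case: eqP => [->|/eqP neq_j]; first by rewrite fj0.
  by rewrite -Y'E ?fj_neq.
rewrite -{1}(upd_id z j0); apply: (orient_upd_linked _ _ _ _ _ f_inj fj0 _ ab) => j neq_j.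
by apply: (fsubsetP (YX _ (fj_neq _ neq_j))); rewrite -Y'E ?fj_neq.
Qed.

Lemma admissible_blowup Y c : admissible X Y c -> admissible (blowup X) (blowup Y) c.
Proof.
move=> [YX [Y_st Y_card]]; split; [|split].
- move=> i; have [->|neq_i] := eqVneq i i0; last by rewrite !blowup_neq.
  rewrite /blowup eqxx; apply/fsubsetP => y /mem_cloud_union[x xY yCx].
  by apply/mem_cloud_union; exists x => //; exact: (fsubsetP (YX i0)).
- apply: same_type_linked Y_st => [i /blowup_neq|i _|a] //.
  rewrite /blowup eqxx => /mem_cloud_union[x xY aCx].
  by exists x => //; right; split => //; exact: (fsubsetP (YX i0)).
- move=> i; have [->|neq_i] := eqVneq i i0; last by rewrite !blowup_neq.
  by rewrite /blowup eqxx !card_cloud_union ?fsubset_refl // !natrM mulrCA ler_wpM2l.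
Qed.

Lemma admissible_shrink Y c : admissible (blowup X) Y c -> admissible X (shrink Y) c.
Proof.
move=> [YX [Y_st Y_card]].
set S := [fset x in X i0 | C x `&` Y i0 != fset0].
have YX' i : i != i0 -> Y i `<=` X i by move=> neq_i; rewrite -(blowup_neq X _ neq_i).
have SX : S `<=` X i0 by apply/fsubsetP => x; rewrite inE => /andP[].
have YS : Y i0 `<=` cloud_union S.
  apply/fsubsetP => y yY; move: (fsubsetP (YX i0) y yY); rewrite /blowup eqxx.
  case/mem_cloud_union => x xX yCx; apply/mem_cloud_union; exists x => //.
  by rewrite !inE xX /=; apply/fset0Pn; exists y; exact/fsetIP.
split; [|split].
- move=> i; have [->|neq_i] := eqVneq i i0; last by rewrite shrink_neq // YX'.
  by rewrite /shrink eqxx.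
- apply: same_type_linked Y_st => [i /shrink_neq|i /YX'|a] //.
  rewrite /shrink eqxx inE => /andP[aX /fset0Pn[b /fsetIP[bCa bY]]].
  by exists b => //; left.
- move=> i; have [->|neq_i] := eqVneq i i0; last first.
    by rewrite shrink_neq // -(blowup_neq X _ neq_i).
  have n_pos : 0 < n%:R :> R by rewrite ltr0n.
  have := Y_card i0; rewrite /blowup eqxx card_cloud_union ?fsubset_refl // => le_cY.
  rewrite /shrink eqxx -/S -(ler_pM2l n_pos) mulrCA -!natrM -(card_cloud_union _ SX).
  by apply: le_trans le_cY _; rewrite ler_nat fsubset_leq_card.
Qed.

Lemma cval_blowup : cval X = cval (blowup X).
Proof.
rewrite !cvalE; congr sup; apply/seteqP; split => c [Y YA].
  by exists (blowup Y); exact: admissible_blowup.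
by exists (shrink Y); exact: admissible_shrink.
Qed.

End Blowup.

Theorem lemma3 (R : realType) (d m : nat) (X : 'I_m.+1 -> {fset 'rV[R]_d})
    (n : nat) :
  (forall i, X i != fset0) -> gen_pos_family X -> (1 <= n)%N ->
  exists delta : R, 0 < delta /\
    forall C : 'rV[R]_d -> {fset 'rV[R]_d},
      (forall x, x \in X ord0 ->
         #|` C x| = n /\ (forall y, y \in C x -> edist y x <= delta)) ->
      let X1n := \big[fsetU/fset0]_(x <- X ord0) C x in
      let Xn := fun i : 'I_m.+1 => if i == ord0 then X1n else X i in
      gen_pos_family Xn ->
      cval X = cval Xn.
Proof.
move=> _ [disjX gen_U] n_gt0.
have [e1 e1_gt0 stable] := exists_pos_orient_stable _ gen_U.
have [e2 e2_gt0 separated] := exists_pos_separating (X ord0).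
exists (Num.min e1 e2); split => [|C C_ok X1n Xn _]; first by rewrite lt_min e1_gt0 e2_gt0.
have cloud_close x y e : x \in X ord0 -> y \in C x -> Num.min e1 e2 <= e -> coord_close e x y.
  by move=> xX yCx le_e; apply: coord_close_le le_e _; apply/coord_close_edist/(C_ok x xX).2.
apply: (cval_blowup X ord0 C n) => // [x /C_ok[]//|x x' xX x'X neq_xx'|f z j0 c f_inj zX fj0 cC].
  apply/fdisjointP => y yCx; apply/negP => yCx'; move/eqP: neq_xx'; apply.
  by apply: (separated x x' y) => //; apply: cloud_close; rewrite // ge_min lexx orbT.
have z0X : z j0 \in X ord0 by rewrite -fj0.
apply: stable; first exact: inj_tuple_disjoint disjX f_inj zX.
  by move=> j; apply/bigfcupP; exists (f j); rewrite ?mem_index_enum.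
by apply: cloud_close cC _; rewrite ?ge_min ?lexx.
Qed.
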